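(* Let $n\ge 1$ and let \[ f(x):=P(x)+iQ(x),\qquad P(x):=x^n+a_1x^{n-1}+a_2x^{n-2}+\cdots+a_n,\qquad Q(x):=b_1x^{n-1}+b_2x^{n-2}+\cdots+b_n, \] where all $a_i$ and $b_i$ are real. Suppose $f$ has (counting multiplicities) $n_+$ roots with positive imaginary part, $n_-$ roots with negative imaginary part and $n_0<n$ real roots, so $n_++n_-+n_0=n$. Let $d:=n-2\min\{n_+,n_-\}$. Then, counting multiplicities, there exist at least $d$ real roots $\mu_1,\mu_2,\ldots,\mu_d$ of $P$ and at least $d-1$ real roots $\nu_1,\nu_2,\ldots,\nu_{d-1}$ of $Q$ such that \[ \mu_1\le\nu_1\le\mu_2\le\nu_2\le\cdots\le\nu_{d-1}\le\mu_d . \] If $n_0=0$, then these inequalities may be taken to be strict.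
   Context: ''Counting multiplicities'' means that a root of multiplicity $m$ may appear up to $m$ times in the respective list. *)

From mathcomp Require Import all_boot all_order all_algebra.
From mathcomp Require Import complex.
Set Implicit Arguments. Unset Strict Implicit. Unset Printing Implicit Defensive.
Import Order.TTheory GRing.Theory Num.Theory.
Local Open Scope ring_scope.

Definition cpoly (R : rcfType) (p : {poly R}) : {poly R[i]} :=
  map_poly (fun x : R => Complex x 0) p.

Definition fpoly (R : rcfType) (P Q : {poly R}) : {poly R[i]} :=
  cpoly P + (Complex (0 : R) 1)%:P * cpoly Q.

From mathcomp Require Import all_boot all_order all_algebra.
From mathcomp Require Import complex polyorder polyrcf qe_rcf_th.
From mathcomp Require Import ring zify.
Set Implicit Arguments. Unset Strict Implicit. Unset Printing Implicit Defensive.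
Import Order.TTheory GRing.Theory Num.Theory Pdiv.Ring.
Local Open Scope ring_scope.

(* Write f = F g, where F = prod (X - r) runs over the real roots of f, so that
   F is a real polynomial, and g = A + i B collects the non-real roots; then
   P = F A and Q = F B.  Multiplying g by X - z changes the Cauchy index of B/A
   over R by -sgn (Im z), hence Ind (B/A) = n_- - n_+.  A Cauchy index of
   absolute value k forces k roots of A strictly interlaced with k - 1 roots of
   B, and inserting the n_0 real roots of F into both lists keeps a weak
   interlacing: this gives d = n_0 + |n_- - n_+| roots of P and d - 1 of Q. *)

Section RealAndImaginaryParts.
Variable R : rcfType.
Implicit Types (A B : {poly R}) (g : {poly R[i]}).

Definition reim g A B := forall i, g`_i = Complex A`_i B`_i.

Lemma reim_fpoly A B : reim (fpoly A B) A B.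
Proof.
move=> i; rewrite /fpoly coefD coefCM /cpoly !coef_map_id0 //.
by apply/eqP; rewrite eq_complex /=; apply/andP; split; apply/eqP; ring.
Qed.

Lemma reim1 : reim 1 1 0.
Proof. by move=> i; rewrite !coef1 coef0; case: i. Qed.

Lemma reim_inj g g' A B : reim g A B -> reim g' A B -> g = g'.
Proof. by move=> h h'; apply/polyP => i; rewrite h h'. Qed.

Lemma reim_uniq g A B A' B' : reim g A B -> reim g A' B' -> A = A' /\ B = B'.
Proof. by move=> h h'; split; apply/polyP => i; have := h i; rewrite h' => -[]. Qed.

Lemma size_reim g A B : reim g A B -> (size B <= size A)%N -> size g = size A.
Proof.
move=> h sBA; apply/eqP; rewrite eqn_leq; apply/andP; split.
  by apply/leq_sizeP => j hj; rewrite h !nth_default // (leq_trans sBA).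
have [->|A0] := eqVneq A 0; first by rewrite size_poly0.
rewrite -[size A]prednK ?size_poly_gt0 // ltnNge.
apply: contra A0 => /leq_sizeP/(_ _ (leqnn _)).
by rewrite h -lead_coefE => -[/eqP]; rewrite lead_coef_eq0.
Qed.

Lemma reim_mulXsubC g A B z : reim g A B ->
  reim (('X - z%:P) * g) (('X - (complex.Re z)%:P) * A + (complex.Im z)%:P * B)
                         (('X - (complex.Re z)%:P) * B - (complex.Im z)%:P * A).
Proof.
move=> h i; rewrite !(mulrBl, coefB, coefD, coefXM, coefCM) !h.
case: z => a b /=; case: i => [|i] /=;
  by apply/eqP; rewrite eq_complex /= ?sub0r; apply/andP; split; apply/eqP; ring.
Qed.

End RealAndImaginaryParts.

Section CauchyIndex.
Variable R : rcfType.
Implicit Types (A B p q r : {poly R}) (a b x : R).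

Lemma jump_addMmonic p k q x : q \is monic -> jump (p + k * q) q x = jump p q x.
Proof.
move=> mq; rewrite jump_mod [RHS]jump_mod (eqP mq) sgz1 !expr1n !mul1r.
by rewrite Pdiv.RingMonic.rmodpD // Pdiv.RingMonic.rmodp_mull // addr0.
Qed.

Lemma jump_mul_pos r p q x : (forall y, 0 < r.[y]) -> jump (r * p) q x = jump p q x.
Proof.
move=> r_gt0; have r_nroot y : ~~ root r y by rewrite rootE gt_eqF.
have r0 : r != 0 by apply: contraNneq (r_nroot 0) => ->; rewrite root0.
have [->|p0] := eqVneq p 0; first by rewrite mulr0.
rewrite /jump mulf_eq0 (negPf r0) (negPf p0) /= mu_mul ?mulf_neq0 //.
rewrite (muNroot (r_nroot x)) add0n -mulrA sgp_right_mul sgp_rightNroot //.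
by rewrite gtr0_sg // mul1r.
Qed.

Lemma cindexR_mulCp c p q : cindexR (c *: p) q = sgz c * cindexR p q.
Proof. by rewrite /cindexR big_distrr; apply: eq_bigr => x _; rewrite jump_mulCp. Qed.

Lemma cindexR_inv_monic p q : q \is monic -> cindexR q p + cindexR p q = crossR (p * q).
Proof.
move=> mq; have ind_mod : cindexR (rmodp p q) q = cindexR p q.
  by apply: eq_bigr => x _; rewrite [RHS]jump_mod (eqP mq) sgz1 expr1n mul1r.
rewrite cindexR_rec /next_mod (eqP mq) expr1n scaleN1r -scaleN1r.
by rewrite cindexR_mulCp ind_mod sgzN sgz1 mulN1r addrNK.
Qed.

Lemma crossR_monic p : p \is monic -> ~~ odd (size p) -> crossR p = 1.
Proof.
move=> mp ev; have p0 := monic_neq0 mp.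
rewrite /crossR /sgp_minfty /sgp_pinfty (eqP mp).
case sp: (size p) ev => [|s] /=; first by move: p0; rewrite -size_poly_eq0 sp.
rewrite negbK => odd_s; rewrite -signr_odd odd_s expr1 mulr1 sgrN sgr1.
by rewrite /variation sgz1 mul1r mulr1 ltrN10.
Qed.

Lemma monic_mulXsubC_add A B a b : A \is monic -> (size B < size A)%N ->
  ('X - a%:P) * A + b%:P * B \is monic /\
  size (('X - a%:P) * A + b%:P * B) = (size A).+1.
Proof.
move=> mA sBA; have sXA : size (('X - a%:P) * A) = (size A).+1.
  by rewrite size_monicM ?monicXsubC ?monic_neq0 // size_XsubC.
have sbB : (size (b%:P * B)%R < size (('X - a%:P) * A)%R)%N.
  by rewrite sXA ltnS mul_polyC (leq_trans (size_scale_leq _ _)) // ltnW.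
split; last by rewrite size_polyDl.
by rewrite monicE lead_coefDl // lead_coef_monicM ?monicXsubC // (eqP mA).
Qed.

Lemma size_mulXsubC_sub A B a b : (size B < size A)%N ->
  (size (('X - a%:P) * B - b%:P * A)%R <= size A)%N.
Proof.
move=> sBA; rewrite (leq_trans (size_polyD _ _)) // geq_max size_polyN.
rewrite mul_polyC size_scale_leq andbT (leq_trans (size_polyMleq _ _)) //.
by rewrite size_XsubC addSn add1n.
Qed.

Lemma cindexR_mulXsubC A B a b : A \is monic -> (size B < size A)%N -> b != 0 ->
  cindexR (('X - a%:P) * B - b%:P * A) (('X - a%:P) * A + b%:P * B)
  = cindexR B A - sgz b.
Proof.
move=> mA sBA b0; set u := 'X - a%:P; set A' := u * A + _; set B' := u * B - _.
have [mA' sA'] := monic_mulXsubC_add a b mA sBA.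
have sgz_b2 : sgz b * sgz b = 1 by move: b0; case: sgzP.
have ind_A'A : cindexR A' A = sgz b * cindexR B A.
  rewrite -cindexR_mulCp /cindexR; apply: eq_bigr => x _.
  by rewrite /A' addrC jump_addMmonic // mul_polyC.
(* [b B' = - (u^2 + b^2) A + u A'], and [u^2 + b^2] has no real root *)
have ind_B'A' : sgz b * cindexR B' A' = - cindexR A A'.
  pose r := u ^+ 2 + b%:P ^+ 2.
  have r_gt0 y : 0 < r.[y].
    rewrite /r hornerD !horner_exp hornerC.
    by apply: ltr_wpDl; [exact: sqr_ge0 | rewrite exprn_even_gt0].
  rewrite -cindexR_mulCp /cindexR -sumrN; apply: eq_bigr => x _.
  have -> : b *: B' = (-1) *: (r * A) + u * A' by rewrite /B' /A' /r scaleN1r -mul_polyC; ring.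
  by rewrite jump_addMmonic // jump_mulCp jump_mul_pos // sgzN sgz1 mulN1r.
have cross_AA' : crossR (A * A') = 1.
  apply: crossR_monic; first by rewrite monicMl.
  by rewrite size_monicM ?monic_neq0 // sA' addnS /= addnn odd_double.
have ind_AA' : cindexR A A' = 1 - sgz b * cindexR B A.
  by rewrite -cross_AA' -cindexR_inv_monic // ind_A'A addrAC subrr add0r.
rewrite -[cindexR B' A']mul1r -sgz_b2 -mulrA ind_B'A' ind_AA'.
by rewrite opprB mulrBr mulrA sgz_b2 mul1r mulr1.
Qed.

End CauchyIndex.

Section Factorization.
Variable R : rcfType.
Implicit Types (A B : {poly R}) (g : {poly R[i]}) (s : seq R[i]).

Lemma reim_prod_nonreal s : all (fun z => complex.Im z != 0) s ->
  exists A B, [/\ reim (\prod_(z <- s) ('X - z%:P)) A B, A \is monic,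
     size A = (size s).+1, (size B <= size s)%N &
     cindexR B A = (count (fun z => complex.Im z < 0) s)%:Z
                   - (count (fun z => 0 < complex.Im z) s)%:Z].
Proof.
elim: s => [_|z s IH /= /andP [Imz0 /IH [A [B [hAB mA sA sB indBA]]]]].
  exists 1, 0; rewrite big_nil size_poly1 size_poly0 cindexR0p.
  by split; [exact: reim1 | exact: monic1 | | |].
have sBA : (size B < size A)%N by rewrite sA ltnS.
have [mA' sA'] := monic_mulXsubC_add (complex.Re z) (complex.Im z) mA sBA.
eexists; eexists; split; first by rewrite big_cons; apply: reim_mulXsubC hAB.
- exact: mA'.
- by rewrite sA' sA.
- by rewrite -sA size_mulXsubC_sub.
rewrite cindexR_mulXsubC // indBA.
by case: ltrgtP Imz0 => Imz // _; rewrite ?(ltr0_sgz Imz) ?(gtr0_sgz Imz) /=; lia.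
Qed.

Lemma reim_prod_real s g A B : all (fun z => complex.Im z == 0) s -> reim g A B ->
  reim (\prod_(z <- s) ('X - z%:P) * g)
       (\prod_(z <- s) ('X - (complex.Re z)%:P) * A)
       (\prod_(z <- s) ('X - (complex.Re z)%:P) * B).
Proof.
move=> + hg; elim: s => [|z s IH] /=; first by rewrite !big_nil !mul1r.
move=> /andP [/eqP Imz /IH /(reim_mulXsubC z)]; rewrite !big_cons -!mulrA.
by rewrite Imz polyC0 !mul0r addr0 subr0.
Qed.

Lemma reim_prod_nonreal_noroot s A B : all (fun z => complex.Im z != 0) s ->
  reim (\prod_(z <- s) ('X - z%:P)) A B -> forall x, root A x -> ~~ root B x.
Proof.
move=> nonreal hAB x /factor_theorem [A1 eA]; apply/negP => /factor_theorem [B1 eB].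
rewrite {}eA {}eB in hAB.
have := reim_mulXsubC (Complex x 0) (reim_fpoly A1 B1).
rewrite /= polyC0 !mul0r addr0 subr0 ![('X - x%:P) * _]mulrC => /(reim_inj hAB) eq_g.
have : root (\prod_(z <- s) ('X - z%:P)) (Complex x 0).
  by rewrite eq_g rootM root_XsubC eqxx.
by rewrite root_prod_XsubC => /(allP nonreal); rewrite eqxx.
Qed.

Lemma count_Im_sign s :
  (count (fun z => 0 < complex.Im z)%R s + count (fun z => complex.Im z < 0)%R s
   + count (fun z => complex.Im z == 0)%R s)%N = size s.
Proof. by elim: s => //= z s <-; case: ltrgtP; lia. Qed.

End Factorization.

Section Interlacing.
Variable T : Type.
Implicit Types (r : rel T) (mu nu : seq T).

Fixpoint interlaced r mu nu : bool :=
  match mu, nu with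
  | [:: _], [::] => true
  | x :: mu', y :: nu' => [&& r x y, r y (head x mu') & interlaced r mu' nu']
  | _, _ => false
  end.

Lemma interlaced_cons r x x' mu y nu :
  interlaced r (x :: x' :: mu) (y :: nu) = [&& r x y, r y x' & interlaced r (x' :: mu) nu].
Proof. by []. Qed.

Lemma size_interlaced r mu nu : interlaced r mu nu -> size mu = (size nu).+1.
Proof.
elim: mu nu => [|x [|x' mu] IH] [|y nu] //=; first by case/and3P.
by case/and3P => _ _ /IH /= ->.
Qed.

Lemma interlaced_nth r x0 mu nu : interlaced r mu nu ->
  forall i, (i.+1 < size mu)%N ->
  r (nth x0 mu i) (nth x0 nu i) && r (nth x0 nu i) (nth x0 mu i.+1).
Proof.
elim: mu nu => [|x [|x' mu] IH] [|y nu] //= h [|i] //=; first by case/and3P: h => -> ->.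
by case/and3P: h => _ _ /IH; apply.
Qed.

Lemma sub_interlaced r r' : subrel r r' -> subrel (interlaced r) (interlaced r').
Proof.
move=> rr' mu; elim: mu => [|x [|x' mu] IH] [|y nu] //=; first by case/and3P.
by case/and3P => /rr' -> /rr' -> /IH.
Qed.

Lemma sorted_interlaced r mu nu : transitive r ->
  interlaced r mu nu -> sorted r mu && sorted r nu.
Proof.
move=> tr; elim: mu nu => [|x [|x' mu] IH] [|y nu] //=; first by case/and3P.
case/and3P => rxy ryx' /[dup] /IH /andP [/= -> srt_nu].
rewrite (tr _ _ _ rxy ryx') /=; case: nu srt_nu => [|y' nu] //= -> /[!andbT].
by case: mu {IH} => [|x'' mu] /and3P [rx'y' _ _]; apply: tr rx'y'.
Qed.

End Interlacing.

Section Insort.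
Variables (disp : Order.disp_t) (T : orderType disp).
Implicit Types (x : T) (s mu nu L : seq T).
Local Open Scope order_scope.

Fixpoint insort x s : seq T :=
  if s is y :: s' then (if x <= y then x :: s else y :: insort x s') else [:: x].

Lemma perm_insort x s : perm_eq (insort x s) (x :: s).
Proof.
elim: s => [|y s IH] //=; case: ifP => _ //.
by rewrite (perm_trans (y := y :: x :: s)) ?perm_cons // (perm_catCA [:: y] [:: x]).
Qed.

Lemma insort_cons x y s : insort x (y :: s) = if x <= y then x :: y :: s else y :: insort x s.
Proof. by []. Qed.

Lemma interlaced_insort x mu nu :
  interlaced <=%O mu nu -> interlaced <=%O (insort x mu) (insort x nu).
Proof.
elim: mu nu => [|y [|y' mu] IH] [|z nu] //.
- by move=> _ /=; case: leP => [xy|/ltW yx] /=; rewrite lexx ?xy ?yx.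
- by case/and3P.
rewrite interlaced_cons => /and3P [yz zy' h]; rewrite !insort_cons.
case: (leP x y) => xy.
  by rewrite (le_trans xy yz) !(interlaced_cons <=%O) lexx xy yz zy' h.
case: (leP x z) => xz.
  by rewrite (le_trans xz zy') !(interlaced_cons <=%O) (ltW xy) lexx xz zy' h.
have [c [t [ins_mu zc]]] : exists c t, insort x (y' :: mu) = c :: t /\ z <= c.
  rewrite insort_cons; case: ifP => _; first by exists x, (y' :: mu); rewrite ltW.
  by exists y', (insort x mu).
by have := IH _ h; rewrite -insort_cons ins_mu (interlaced_cons <=%O) yz zc => ->.
Qed.

Lemma perm_foldr_insort L s : perm_eq (foldr insort s L) (L ++ s).
Proof. by elim: L => [|x L IH] //=; rewrite (perm_trans (perm_insort _ _)) ?perm_cons. Qed.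

Lemma size_foldr_insort L s : size (foldr insort s L) = (size L + size s)%N.
Proof. by rewrite (perm_size (perm_foldr_insort L s)) size_cat. Qed.

Lemma interlaced_foldr_insort L mu nu : interlaced <=%O mu nu ->
  interlaced <=%O (foldr insort mu L) (foldr insort nu L).
Proof. by move=> h; elim: L => [|x L IH] //=; apply: interlaced_insort. Qed.

End Insort.

Arguments insort {disp T}.

Lemma first_passage (T : Type) (w : T -> int) (l : seq T) (c : nat) :
  (forall t, -1 <= w t <= 1) -> \sum_(t <- l) w t <= - (c.+1)%:Z ->
  exists l1 x l2, [/\ l = l1 ++ x :: l2, \sum_(t <- l1) w t = - c%:Z & w x = -1].
Proof.
move=> w_bound; elim: l c => [|t l IH] c; first by rewrite big_nil; lia.
rewrite big_cons; have := IH; move: (\sum_(t <- l) w t) => S {}IH sum_le.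
have {w_bound}[wt|[wt|wt]] : w t = -1 \/ w t = 0 \/ w t = 1 by have := w_bound t; lia.
- case: c sum_le => [|c] sum_le; first by exists [::], t, l; rewrite big_nil.
  have [|l1 [x [l2 [-> sum1 wx]]]] := IH c; first by lia.
  by exists (t :: l1), x, l2; rewrite big_cons sum1 wt; split => //; lia.
- have [|l1 [x [l2 [-> sum1 wx]]]] := IH c; first by lia.
  by exists (t :: l1), x, l2; rewrite big_cons sum1 wt; split => //; lia.
- have [|l1 [x [l2 [-> sum1 wx]]]] := IH c.+1; first by lia.
  by exists (t :: l1), x, l2; rewrite big_cons sum1 wt; split => //; lia.
Qed.

Lemma take_index_cat (T : eqType) (x : T) l1 l2 :
  x \notin l1 -> take (index x (l1 ++ x :: l2)) (l1 ++ x :: l2) = l1.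
Proof. by move=> x_l1; rewrite index_cat (negPf x_l1) /= eqxx addn0 take_size_cat. Qed.

Section RootsOfCauchyIndex.
Variable R : rcfType.
Implicit Types (A B p q : {poly R}) (a b x : R).

Lemma roots_split p a b x : p != 0 -> x \in `]a, b[ ->
  roots p a b = roots p a x ++ (if root p x then [:: x] else [::]) ++ roots p x b.
Proof.
move=> p0 x_ab; have /andP [ax xb] : (a < x) && (x < b) by rewrite in_itv in x_ab.
symmetry; apply: roots_uniq => //.
  move=> y; rewrite !mem_cat !in_roots p0 !andbT !in_itv /=.
  have -> : (y \in (if root p x then [:: x] else [::])) = (y == x) && root p x.
    by case: root; rewrite ?in_cons ?in_nil ?orbF ?andbT ?andbF.
  have [yx|xy|->] := ltgtP y x.
  - by rewrite (lt_trans yx xb) /=; case: (a < y); case: root.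
  - by rewrite (lt_trans ax xy) /=; case: (y < b); case: root.
  - by rewrite ax xb /=; case: root.
have below_x u : u \in roots p a x -> u < x by move=> /roots_in; rewrite in_itv => /andP[].
have above_x u : u \in roots p x b -> x < u by move=> /roots_in; rewrite in_itv => /andP[].
rewrite (sorted_pairwise lt_trans) !pairwise_cat -!(sorted_pairwise lt_trans).
rewrite !sorted_roots /= !andbT; apply/andP; split; last first.
  by case: root; rewrite //= andbT; apply/allrelP => u v; rewrite inE => /eqP -> /above_x.
apply/allrelP => u v /below_x ux; rewrite mem_cat => /orP [|/above_x xv].
  by case: root; rewrite ?in_cons ?in_nil ?orbF // => /eqP ->.
exact: lt_trans ux xv.
Qed.

Lemma jump_bound q p x : -1 <= jump q p x <= 1.
Proof. by rewrite /jump; case: (sgp_right _ _ < 0); case: (_ != 0); case: odd. Qed.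

Variables A B : {poly R}.
Hypotheses (A0 : A != 0) (B0 : B != 0) (AB_noroot : forall x, root A x -> ~~ root B x).

Local Notation BA := (B * A).

Let BA0 : BA != 0. Proof. by rewrite mulf_neq0. Qed.

Let noroot_A x : ~~ root BA x -> ~~ root A x.
Proof. by rewrite rootM negb_or => /andP []. Qed.

Lemma cindex_split a b x : x \in `]a, b[ -> ~~ root A x ->
  cindex a b B A = cindex a x B A + cindex x b B A.
Proof.
by move=> x_ab Ax; rewrite /cindex (roots_split A0 x_ab) (negPf Ax) !big_cat /= big_nil add0r.
Qed.

Lemma cindex_noroot a b : {in `]a, b[, forall z, ~~ root A z} -> cindex a b B A = 0.
Proof. by move=> h; rewrite /cindex no_root_roots // big_nil. Qed.

Lemma jumpN1 x : jump B A x = -1 -> [/\ root A x, odd (\mu_x BA) & sgp_right BA x < 0].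
Proof.
move=> jx; have Ax : root A x by apply/negPn/negP => Ax; move: jx; rewrite noroot_jump.
have muB : \mu_x B = 0%N by apply/muNroot/AB_noroot.
move: jx; rewrite /jump muB subn0 B0 mu_mul // muB add0n.
by case: (sgp_right BA x < 0); case: (odd (\mu_x A)) => // /eqP.
Qed.

Lemma first_jumpN1 a b : a < b -> cindex a b B A <= -1 ->
  exists x, [/\ x \in `]a, b[, jump B A x = -1, cindex a x B A = 0
             & cindex x b B A = cindex a b B A + 1].
Proof.
move=> ab ind_le.
have [l1 [x [l2 [roots_ab sum1 jx]]]] := @first_passage _ _ _ 0 (jump_bound B A) ind_le.
have x_roots : x \in roots A a b by rewrite roots_ab mem_cat mem_head orbT.
have x_ab := roots_in x_roots.
have split_ab := roots_split A0 x_ab; rewrite (root_roots x_roots) /= in split_ab.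
have l1E : l1 = roots A a x.
  have x_l1 : x \notin l1.
    by move: (uniq_roots a b A); rewrite roots_ab cat_uniq /= negb_or => /and3P [_ /andP []].
  have x_ax : x \notin roots A a x by rewrite in_roots in_itv /= ltxx !andbF.
  by rewrite -(take_index_cat l2 x_l1) -roots_ab split_ab take_index_cat.
exists x; split => //; first by rewrite /cindex -l1E sum1.
by rewrite /cindex split_ab big_cat big_cons -l1E sum1 jx /= add0r addrC addrNK.
Qed.

Lemma left_neighbour a x : a < x -> exists y, [/\ a < y, y < x, ~~ root BA y,
  cindex a y B A = cindex a x B A & Num.sg BA.[y] = (-1) ^+ odd (\mu_x BA) * sgp_right BA x].
Proof.
move=> ax; have [y y_nb] := neighpl_wit ax BA0.
have := y_nb; rewrite /neighpl in_itv /= => /andP [prev_y yx].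
have := prev_root_in BA a x; rewrite in_itv /= (min_l (ltW ax)) => /andP [a_prev _].
have ay : a < y := le_lt_trans a_prev prev_y.
exists y; split => //; [exact: neighpl_root y_nb | | exact: sgr_neighpl y_nb].
rewrite (@cindex_split a x y) ?in_itv /= ?ay ?yx ?noroot_A ?(neighpl_root y_nb) //.
rewrite [cindex y x B A]cindex_noroot ?addr0 // => z; rewrite in_itv /= => /andP [yz zx].
by apply/noroot_A/(@neighpl_root _ _ a x); rewrite /neighpl in_itv /= zx (lt_trans prev_y yz).
Qed.

Lemma right_neighbour x b : x < b -> exists y, [/\ x < y, y < b, ~~ root BA y,
  cindex y b B A = cindex x b B A & Num.sg BA.[y] = sgp_right BA x].
Proof.
move=> xb; have [y y_nb] := neighpr_wit xb BA0.
have := y_nb; rewrite /neighpr in_itv /= => /andP [xy y_next].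
have := next_root_in BA x b; rewrite in_itv /= (max_l (ltW xb)) => /andP [_ next_b].
have yb : y < b := lt_le_trans y_next next_b.
exists y; split => //; [exact: neighpr_root y_nb | | exact: sgr_neighpr y_nb].
rewrite [RHS](@cindex_split x b y) ?in_itv /= ?xy ?yb ?noroot_A ?(neighpr_root y_nb) //.
rewrite [cindex x y B A]cindex_noroot ?add0r // => z; rewrite in_itv /= => /andP [xz zy].
by apply/noroot_A/(@neighpr_root _ _ x b); rewrite /neighpr in_itv /= xz (lt_trans zy y_next).
Qed.

(* At the first jump [-1] of [B/A], [B * A] passes from positive to negative.
   If [B * A] is negative at [a], the index of [A/B] on [(a, x)] is nonzero by
   [cindex_inv], so [B] has a root there. *)
Lemma cindex_step a b : a < b -> ~~ root BA a -> cindex a b B A <= -1 ->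
  exists x y, [/\ root A x, a < x, x < y, y < b & ~~ root BA y] /\
    [/\ BA.[y] < 0, cindex y b B A = cindex a b B A + 1 &
        BA.[a] < 0 -> exists2 z, root B z & a < z < x].
Proof.
move=> ab BAa ind_le.
have [x [x_ab jx ind_ax ind_xb]] := first_jumpN1 ab ind_le.
have [Ax odd_mu sgp_lt0] := jumpN1 jx.
have /andP [ax xb] : (a < x) && (x < b) by rewrite in_itv in x_ab.
have [y [xy yb BAy ind_yb sg_y]] := right_neighbour xb.
have sgpN1 : sgp_right BA x = -1 by rewrite -sg_y ltr0_sg // -sgr_lt0 sg_y.
exists x, y; split => //; split; first by rewrite -sgr_lt0 sg_y sgpN1 ltrN10.
  by rewrite ind_yb ind_xb.
move=> BAa_lt0; have [y' [ay' y'x BAy' ind_ay' sg_y']] := left_neighbour ax.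
have BAy'_gt0 : 0 < BA.[y'] by rewrite -sgr_gt0 sg_y' odd_mu sgpN1 expr1 mulN1r opprK ltr01.
have ind_AB : cindex a y' A B = 1.
  have := @cindex_inv _ a y' ay' A B; rewrite ![A * B]mulrC => /(_ BAa BAy').
  rewrite ind_ay' ind_ax add0r /cross /variation (gtr0_sgz BAy'_gt0).
  by rewrite (pmulr_llt0 _ BAy'_gt0) BAa_lt0 mul1r.
have [z z_roots] : exists z, z \in roots B a y'.
  case E: (roots B a y') ind_AB => [|z s]; last by exists z; rewrite mem_head.
  by rewrite /cindex E big_nil.
exists z; first exact: root_roots z_roots.
have := roots_in z_roots; rewrite in_itv /= => /andP [-> zy'].
exact: lt_trans zy' y'x.
Qed.

Lemma cindex_interlacing k a b : a < b -> ~~ root BA a -> cindex a b B A <= - (k.+1)%:Z ->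
  exists mu nu, [/\ size mu = k.+1, interlaced <%R mu nu, all (root A) mu, all (root B) nu &
     BA.[a] < 0 -> exists2 z, root B z & a < z < head 0 mu].
Proof.
elim: k a => [|k IH] a ab BAa ind_le.
  have [x [_ [[Ax _ _ _ _] [_ _ root_B]]]] := cindex_step ab BAa ind_le.
  by exists [:: x], [::]; split; rewrite //= Ax.
have ind_le1 : cindex a b B A <= -1 by apply: le_trans ind_le _; lia.
have [x [y [[Ax ax xy yb BAy] [BAy_lt0 ind_yb root_B]]]] := cindex_step ab BAa ind_le1.
have [|mu [nu [size_mu int_mu_nu Amu Bnu root_B_mu]]] := IH y yb BAy.
  by rewrite ind_yb; lia.
have [z Bz /andP [yz z_mu]] := root_B_mu BAy_lt0.
exists (x :: mu), (z :: nu); split => //=; rewrite ?size_mu ?Ax ?Bz //.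
case: mu size_mu int_mu_nu {Amu root_B_mu} z_mu => // x' mu _ int_mu_nu /= z_mu.
by rewrite (lt_trans xy yz) z_mu.
Qed.

Lemma cindexR_interlacing k : cindexR B A = - (k.+1)%:Z ->
  exists mu nu, [/\ size mu = k.+1, interlaced <%R mu nu, all (root A) mu & all (root B) nu].
Proof.
move=> indR; set c := cauchy_bound BA.
have [BA_left BA_right] := (le_cauchy_bound BA0, ge_cauchy_bound BA0).
rewrite -(@cindexRP _ B A (- c) c) in indR; last 2 first.
- by move=> z /BA_left /noroot_A.
- by move=> z /BA_right /noroot_A.
have c_gt0 : 0 < c := cauchy_bound_gt0 BA.
have [|||mu [nu [? ? ? ? _]]] := @cindex_interlacing k (- c) c; last by exists mu, nu.
- by rewrite -subr_gt0 opprK addr_gt0.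
- by apply: BA_left; rewrite in_itv /= lexx.
- by rewrite indR.
Qed.

End RootsOfCauchyIndex.

Section RealInterlacing.
Variable R : rcfType.
Implicit Types (A B p q : {poly R}) (L mu nu : seq R).

Lemma sorted_roots_dvdp p s : sorted <%R s -> all (root p) s ->
  \prod_(x <- s) ('X - x%:P) %| p.
Proof.
by move=> /(sorted_uniq lt_trans ltxx) s_uniq /uniq_roots_dvdp; apply; rewrite uniq_rootsE.
Qed.

Lemma cindexR_abs_interlacing A B k : A != 0 -> (forall x, root A x -> ~~ root B x) ->
  `|cindexR B A|%N = k.+1 ->
  exists mu nu, [/\ size mu = k.+1, interlaced <%R mu nu,
    \prod_(x <- mu) ('X - x%:P) %| A & \prod_(x <- nu) ('X - x%:P) %| B].
Proof.
move=> A0; wlog indR : B / cindexR B A = - (k.+1)%:Z.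
  move=> wlog_neg AB_noroot abs_ind.
  case: (ltrP (cindexR B A) 0) => ind_sgn; first by apply: wlog_neg => //; lia.
  have indN : cindexR (- B) A = - cindexR B A.
    by rewrite -scaleN1r cindexR_mulCp sgzN sgz1 mulN1r.
  have [|||mu [nu [? ? ? dvd_nu]]] := wlog_neg (- B).
  - by rewrite indN; lia.
  - by move=> x /AB_noroot; rewrite rootN.
  - by rewrite indN; lia.
  - by exists mu, nu; split; rewrite // -dvdpNr.
move=> AB_noroot _.
have B0 : B != 0 by apply: contra_eq_neq indR => ->; rewrite cindexR0p; lia.
have [mu [nu [size_mu int_mu_nu Amu Bnu]]] := cindexR_interlacing A0 B0 AB_noroot indR.
have /andP [srt_mu srt_nu] := sorted_interlaced lt_trans int_mu_nu.
by exists mu, nu; split; rewrite // sorted_roots_dvdp.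
Qed.

Lemma dvdp_foldr_insort L mu0 p : \prod_(x <- mu0) ('X - x%:P) %| p ->
  \prod_(x <- foldr insort mu0 L) ('X - x%:P) %| \prod_(x <- L) ('X - x%:P) * p.
Proof. by move=> dvd_p; rewrite (perm_big _ (perm_foldr_insort L mu0)) big_cat dvdp_mul. Qed.

Lemma interlacing_mul_prod_XsubC A B L : A != 0 -> (forall x, root A x -> ~~ root B x) ->
  let d := (size L + `|cindexR B A|)%N in
  exists mu nu, [/\ size mu = d, size nu = d.-1,
    (\prod_(x <- mu) ('X - x%:P) %| \prod_(x <- L) ('X - x%:P) * A)
    && (\prod_(x <- nu) ('X - x%:P) %| \prod_(x <- L) ('X - x%:P) * B),
    (forall i, (i.+1 < d)%N -> mu`_i <= nu`_i <= mu`_i.+1) &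
    (L = [::] -> forall i, (i.+1 < d)%N -> mu`_i < nu`_i < mu`_i.+1)].
Proof.
move=> A0 AB_noroot d; case E: `|cindexR B A|%N @d => [|k].
  case: L => [|r L]; first by exists [::], [::]; rewrite !big_nil !dvd1p.
  exists (foldr insort [:: r] L), (foldr insort [::] L).
  rewrite !size_foldr_insort /= addn0 addn1; split => //.
  - rewrite big_cons [_ * \prod_(_ <- L) _]mulrC -!mulrA.
    by rewrite !dvdp_foldr_insort ?big_seq1 ?big_nil ?dvdp_mulIl ?dvd1p.
  - move=> i i_lt; apply: interlaced_nth; rewrite ?size_foldr_insort ?addn1 //.
    exact: interlaced_foldr_insort.
have [mu0 [nu0 [size_mu0 int_mu0_nu0 dvd_mu0 dvd_nu0]]] :=
  cindexR_abs_interlacing A0 AB_noroot E.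
have size_nu0 : size nu0 = k by have := size_interlaced int_mu0_nu0; rewrite size_mu0 => -[].
exists (foldr insort mu0 L), (foldr insort nu0 L).
rewrite !size_foldr_insort size_mu0 size_nu0 !dvdp_foldr_insort //; split => //.
- by rewrite addnS.
- move=> i; rewrite -size_mu0 -size_foldr_insort; apply: interlaced_nth.
  exact/interlaced_foldr_insort/(sub_interlaced ltW).
- by move=> -> i; rewrite add0n -size_mu0; apply: interlaced_nth.
Qed.

End RealInterlacing.

Lemma fpoly_factor (R : rcfType) (P Q : {poly R}) (rs : seq R[i]) :
  fpoly P Q = \prod_(z <- rs) ('X - z%:P) ->
  exists L A B,
    [/\ P = \prod_(x <- L) ('X - x%:P) * A /\ Q = \prod_(x <- L) ('X - x%:P) * B,
      size L = count (fun z => complex.Im z == 0) rs, A != 0,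
      forall x, root A x -> ~~ root B x &
      cindexR B A = (count (fun z => complex.Im z < 0) rs)%:Z
                    - (count (fun z => 0 < complex.Im z) rs)%:Z].
Proof.
move=> f_prod; set real := fun z : R[i] => complex.Im z == 0.
have [A [B [reim_g mA _ _ indBA]]] := reim_prod_nonreal (filter_all (predC real) rs).
have := reim_prod_real (filter_all real rs) reim_g.
rewrite -big_cat (perm_big _ (permEl (perm_filterC real rs))) -f_prod.
move=> /(reim_uniq (reim_fpoly P Q)) [-> ->].
exists [seq complex.Re z | z <- filter real rs], A, B.
rewrite !big_map size_map size_filter; split => //; first exact: monic_neq0.
  exact: reim_prod_nonreal_noroot (filter_all (predC real) rs) reim_g.
by rewrite indBA !count_filter; congr (Posz _ - Posz _); apply: eq_count => z;
  rewrite /= /real; case: ltrgtP.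
Qed.

Theorem theorem3p2 (R : rcfType) (n : nat) (P Q : {poly R}) (rs : seq R[i]) :
  (1 <= n)%N -> P \is monic -> size P = n.+1 -> (size Q <= n)%N ->
  fpoly P Q = \prod_(z <- rs) ('X - z%:P) ->
  let np := count (fun z => 0 < complex.Im z) rs in
  let nm := count (fun z => complex.Im z < 0) rs in
  let n0 := count (fun z => complex.Im z == 0) rs in
  (n0 < n)%N ->
  let d := (n - 2 * minn np nm)%N in
  exists mu nu : seq R,
    [/\ size mu = d, size nu = d.-1,
        (\prod_(x <- mu) ('X - x%:P) %| P) && (\prod_(x <- nu) ('X - x%:P) %| Q),
        (forall i, (i.+1 < d)%N -> mu`_i <= nu`_i <= mu`_i.+1) &
        (n0 = 0%N -> forall i, (i.+1 < d)%N -> mu`_i < nu`_i < mu`_i.+1)].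
Proof.
move=> _ _ sP sQ f_prod np nm n0 _ d.
have size_rs : size rs = n.
  have sQP : (size Q <= size P)%N by rewrite sP ltnW.
  by have := size_reim (reim_fpoly P Q) sQP; rewrite f_prod size_prod_XsubC sP => -[].
have [L [A [B [[-> ->] size_L A0 AB_noroot indBA]]]] := fpoly_factor f_prod.
have -> : d = (size L + `|cindexR B A|)%N.
  by rewrite /d size_L indBA; have := count_Im_sign rs; rewrite size_rs -/np -/nm -/n0; lia.
have [mu [nu [size_mu size_nu dvd weak strict]]] := interlacing_mul_prod_XsubC L A0 AB_noroot.
by exists mu, nu; split => // n0_eq0; apply/strict/size0nil; rewrite size_L.
Qed.
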